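(* Let $g:\mathbb{R}^m\to\overline{\mathbb{R}}$ be a polyhedral function, written in the form $$g(z)=\max_{j\in J}\{\langle a^j,z\rangle-\alpha_j\}+\delta_{\mathrm{dom}\, g}(z),\qquad \mathrm{dom}\, g=\{z\in\mathbb{R}^m\mid \langle b^i,z\rangle\le\beta_i,\ i\in I\},$$ with $J=\{1,\dots,l\}$, $I=\{1,\dots,s\}$, $a^j,b^i\in\mathbb{R}^m$, $\alpha_j,\beta_i\in\mathbb{R}$. Let $(\bar z,\bar\lambda)\in\mathrm{gph}\,\partial g$. Then there exists $r>0$ such that for every decomposition $$\bar\lambda=\sum_{j\in J(\bar z)}\bar\sigma_j a^j+\sum_{i\in I(\bar z)}\bar\tau_i b^i,\qquad \bar\sigma_j,\bar\tau_i\ge 0,\ \sum_{j\in J(\bar z)}\bar\sigma_j=1,$$ and every $(z,\lambda)\in(\mathrm{gph}\,\partial g)\cap\mathbb{B}_r(\bar z,\bar\lambda)$, we have $$J_+(\bar z,\bar\sigma)\subset J(z)\quad\text{and}\quad I_+(\bar z,\bar\tau)\subset I(z).$$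
   Context: A proper function $g:\mathbb{R}^m\to\overline{\mathbb{R}}=[-\infty,\infty]$ is polyhedral if its epigraph is a polyhedral convex set; every such function admits a representation as in the claim. $\delta_C$ denotes the indicator function of $C$ ($0$ on $C$, $+\infty$ outside). For $j\in J$ set $C_j=\{z\in\mathrm{dom}\, g\mid g(z)=\langle a^j,z\rangle-\alpha_j\}$. For $z\in\mathrm{dom}\, g$ define the active index sets $I(z)=\{i\in I\mid\langle b^i,z\rangle=\beta_i\}$ and $J(z)=\{j\in J\mid z\in C_j\}$. The subdifferential $\partial g$ is that of convex analysis; one has $\partial g(\bar z)=\mathrm{co}\{a^j\mid j\in J(\bar z)\}+\mathrm{cone}\{b^i\mid i\in I(\bar z)\}$, so every $\bar\lambda\in\partial g(\bar z)$ has (generally non-unique) decompositions as in the claim. Given such a decomposition, $J_+(\bar z,\bar\sigma)=\{j\in J(\bar z)\mid\bar\sigma_j>0\}$ and $I_+(\bar z,\bar\tau)=\{i\in I(\bar z)\mid \bar\tau_i>0\}$. $\mathbb{B}_r(x)$ is the closed ball of radius $r$ centered at $x$; on $\mathbb{R}^m\times\mathbb{R}^m$ the Euclidean norm $\|(w,u)\|=\sqrt{\|w\|^2+\|u\|^2}$ is used. *)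

From HB Require Import structures.
From mathcomp Require Import all_boot all_order all_algebra.
From mathcomp Require Import boolp classical_sets reals constructive_ereal.
Set Implicit Arguments. Unset Strict Implicit. Unset Printing Implicit Defensive.
Import Order.TTheory GRing.Theory Num.Theory.
Local Open Scope ring_scope.

Definition dotp (R : realType) (m : nat) (u v : 'rV[R]_m) : R :=
  \sum_(k < m) u 0 k * v 0 k.

Definition vnorm (R : realType) (m : nat) (u : 'rV[R]_m) : R := Num.sqrt (dotp u u).

Definition domg (R : realType) (m s : nat) (b : 'I_s -> 'rV[R]_m) (beta : 'I_s -> R)
  (z : 'rV[R]_m) : bool := [forall i, dotp (b i) z <= beta i].

Definition polyg (R : realType) (m l s : nat) (a : 'I_l -> 'rV[R]_m) (alpha : 'I_l -> R)
  (b : 'I_s -> 'rV[R]_m) (beta : 'I_s -> R) (z : 'rV[R]_m) : \bar R :=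
  if domg b beta z then (\big[Order.max/-oo%E]_(j < l) (dotp (a j) z - alpha j)%:E)%E
  else (+oo)%E.

Definition subdiff (R : realType) (m : nat) (f : 'rV[R]_m -> \bar R)
  (z lam : 'rV[R]_m) : Prop :=
  f z \is a fin_num /\ forall w, (f z + (dotp lam (w - z))%:E <= f w)%E.

Definition Jact (R : realType) (m l s : nat) (a : 'I_l -> 'rV[R]_m) (alpha : 'I_l -> R)
  (b : 'I_s -> 'rV[R]_m) (beta : 'I_s -> R) (z : 'rV[R]_m) (j : 'I_l) : bool :=
  domg b beta z && (polyg a alpha b beta z == (dotp (a j) z - alpha j)%:E).

Definition Iact (R : realType) (m s : nat) (b : 'I_s -> 'rV[R]_m) (beta : 'I_s -> R)
  (z : 'rV[R]_m) (i : 'I_s) : bool := dotp (b i) z == beta i.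

From HB Require Import structures.
From mathcomp Require Import all_boot all_order all_algebra.
From mathcomp Require Import boolp classical_sets reals constructive_ereal.
From mathcomp Require Import topology normedtype ring lra.
Set Implicit Arguments. Unset Strict Implicit. Unset Printing Implicit Defensive.
Import Order.TTheory GRing.Theory Num.Theory.
Local Open Scope classical_set_scope.
Local Open Scope ring_scope.

(* Near zb only pieces and constraints active at zb can be active, so nearby
   points have smaller active sets.  If the active sets of z lie in those of
   y, then g is affine on a segment through y that extends beyond z, hence
   every subgradient lam at z satisfies g z - g y = <lam, z - y>.  Applied
   twice, this shows that for (z, lam) in the graph near (zb, lamb) the gap
   g z0 - g zb - <lamb, z0 - zb> >= 0 equals <lam - lamb, z0 - zb> at every
   z0 with the same active sets as z.  As there are finitely many active-set
   patterns, lam close to lamb forces the gap to vanish at a fixed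
   representative of each pattern, hence on the whole pattern.  A vanishing
   gap is the sum of the nonnegative terms sigma_j (g z - <a^j, z> + alpha_j)
   and tau_i (beta_i - <b^i, z>), so every index of positive weight is active
   at z. *)

Section RealFacts.
Variable R : realType.

Lemma near_right0_ltD (p q d : R) : p < q -> \forall t \near 0^'+, p + t * d < q.
Proof.
move=> pq; set e := (q - p) / (`|d| + 1).
have e0 : 0 < e by rewrite divr_gt0 ?subr_gt0 // ltr_wpDl.
have ee : e * (`|d| + 1) = q - p by rewrite divfK // gt_eqF // ltr_wpDl.
apply: filterS2 (nbhs_right_gt 0) (nbhs_right_lt e0) => t t0 te.
have h1 : t * d <= t * `|d| by rewrite ler_wpM2l ?ler_norm ?ltW.
have h2 : t * `|d| <= e * `|d| by rewrite ler_wpM2r // ltW.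
lra.
Qed.

Lemma near_right0_witness (P : R -> Prop) :
  (\forall t \near 0^'+, P t) -> exists2 t, 0 < t & P t.
Proof. by move=> hP; have [t [t0 Pt]] := filter_ex (filterI (nbhs_right_gt 0) hP); exists t. Qed.

Lemma le_sqrt_sqrD (x y r : R) : 0 <= x -> 0 <= y ->
  Num.sqrt (x ^+ 2 + y ^+ 2) <= r -> x <= r /\ y <= r.
Proof.
move=> x0 y0 hr; split; apply: le_trans hr.
  by rewrite -{1}(ger0_norm x0) -sqrtr_sqr ler_wsqrtr // lerDl sqr_ge0.
by rewrite -{1}(ger0_norm y0) -sqrtr_sqr ler_wsqrtr // lerDr sqr_ge0.
Qed.

End RealFacts.

Section DotProduct.
Variables (R : realType) (m : nat).
Implicit Types u v w z : 'rV[R]_m.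

Lemma dotpC u v : dotp u v = dotp v u.
Proof. by apply: eq_bigr => k _; rewrite mulrC. Qed.

Lemma dotpDr u v w : dotp u (v + w) = dotp u v + dotp u w.
Proof. by rewrite /dotp -big_split; apply: eq_bigr => k _; rewrite mxE mulrDr. Qed.

Lemma dotpZr u c v : dotp u (c *: v) = c * dotp u v.
Proof. by rewrite /dotp mulr_sumr; apply: eq_bigr => k _; rewrite mxE mulrCA. Qed.

Lemma dotpBr u v w : dotp u (v - w) = dotp u v - dotp u w.
Proof. by rewrite dotpDr -scaleN1r dotpZr mulN1r. Qed.

Lemma dotpDl u v w : dotp (v + w) u = dotp v u + dotp w u.
Proof. by rewrite !(dotpC _ u) dotpDr. Qed.

Lemma dotpZl u c v : dotp (c *: v) u = c * dotp v u.
Proof. by rewrite !(dotpC _ u) dotpZr. Qed.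

Lemma dotpBl u v w : dotp (v - w) u = dotp v u - dotp w u.
Proof. by rewrite !(dotpC _ u) dotpBr. Qed.

Lemma dotp_suml (I : finType) (P : pred I) (F : I -> 'rV[R]_m) u :
  dotp (\sum_(i | P i) F i) u = \sum_(i | P i) dotp (F i) u.
Proof. by rewrite /dotp exchange_big; apply: eq_bigr => k _; rewrite summxE mulr_suml. Qed.

Lemma dotp_extend u z y t :
  dotp u (z + t *: (z - y)) = dotp u z + t * (dotp u z - dotp u y).
Proof. by rewrite dotpDr dotpZr dotpBr. Qed.

Definition l1norm u : R := \sum_(k < m) `|u 0 k|.

Lemma dotp_le_l1norm u v t : vnorm v <= t -> dotp u v <= l1norm u * t.
Proof.
move=> vt; rewrite /dotp /l1norm mulr_suml; apply: ler_sum => k _.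
apply: le_trans (ler_norm _) _; rewrite normrM ler_wpM2l //.
apply: le_trans vt; rewrite /vnorm -sqrtr_sqr ler_wsqrtr // /dotp (bigD1 k) //=.
by rewrite expr2 lerDl sumr_ge0 // => i _; rewrite -expr2 sqr_ge0.
Qed.

Lemma dotp_lt_near u z0 c : dotp u z0 < c ->
  \forall r \near 0^'+, forall z, vnorm (z - z0) <= r -> dotp u z < c.
Proof.
move=> uc; apply: filterS (near_right0_ltD (l1norm u) uc) => r hr z zr.
by have := dotp_le_l1norm u zr; rewrite dotpBr; lra.
Qed.

End DotProduct.

Section Polyhedral.
Variables (R : realType) (m l s : nat) (hl : (0 < l)%N).
Variables (a : 'I_l -> 'rV[R]_m) (alpha : 'I_l -> R).
Variables (b : 'I_s -> 'rV[R]_m) (beta : 'I_s -> R).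

Local Notation g := (polyg a alpha b beta).
Local Notation dom := (domg b beta).
Local Notation J := (Jact a alpha b beta).
Local Notation I := (Iact b beta).

Definition piece j z := dotp (a j) z - alpha j.

(* [fine] sends [+oo] to 0, so [gval] is meaningful only on [dom]. *)
Definition gval z : R := fine (g z).

Lemma dom_le z i : dom z -> dotp (b i) z <= beta i.
Proof. by move/forallP. Qed.

Lemma polyg_attained z : dom z ->
  exists2 j, g z = (piece j z)%:E & forall k, piece k z <= piece j z.
Proof.
move=> dz; rewrite /polyg dz.
have [j _ gj] := eq_bigmax (Ordinal hl) xpredT (fun j => (piece j z)%:E) isT
  (fun _ _ => leNye _).
by exists j => // k; rewrite -lee_fin -gj; apply: le_bigmax.
Qed.

Lemma polygE z : dom z -> g z = (gval z)%:E.
Proof. by rewrite /gval => /polyg_attained[j -> _]. Qed.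

Lemma piece_le_gval z k : dom z -> piece k z <= gval z.
Proof. by rewrite /gval => /polyg_attained[j -> ]. Qed.

Lemma gval_attained z : dom z -> exists j, piece j z = gval z.
Proof. by rewrite /gval => /polyg_attained[j -> _]; exists j. Qed.

Lemma JactE z j : dom z -> J z j = (piece j z == gval z).
Proof. by move=> dz; rewrite /Jact dz polygE // eqe eq_sym. Qed.

Definition subgrad z lam : Prop :=
  dom z /\ forall w, dom w -> gval z + dotp lam (w - z) <= gval w.

Lemma subdiff_subgrad z lam : subdiff g z lam -> subgrad z lam.
Proof.
case=> gz hz; have dz : dom z by move: gz; rewrite /polyg; case: (dom z).
by split=> // w dw; have := hz w; rewrite !polygE.
Qed.

Definition active_sub z y :=
  (forall j, J z j -> J y j) /\ (forall i, I z i -> I y i).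

Lemma active_sub_near z0 : dom z0 -> \forall r \near 0^'+,
  forall z, dom z -> vnorm (z - z0) <= r -> active_sub z z0.
Proof.
move=> dz0; have [j0 hj0] := gval_attained dz0.
have nearJ j : \forall r \near 0^'+,
    forall z, dom z -> vnorm (z - z0) <= r -> J z j -> J z0 j.
  have [hj|hj] := boolP (J z0 j); first by apply: nearW.
  have : dotp (a j - a j0) z0 < alpha j - alpha j0.
    have := piece_le_gval j dz0; rewrite JactE // in hj.
    by rewrite le_eqVlt (negbTE hj) -hj0 /piece dotpBl; lra.
  move/dotp_lt_near; apply: filterS => r hr z dz zr.
  have := piece_le_gval j0 dz; have := hr z zr; rewrite dotpBl => hlt hle.
  by rewrite JactE // lt_eqF //; apply: lt_le_trans hle; rewrite /piece; lra.
have nearI i : \forall r \near 0^'+,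
    forall z, vnorm (z - z0) <= r -> I z i -> I z0 i.
  have [hi|hi] := boolP (I z0 i); first by apply: nearW.
  have : dotp (b i) z0 < beta i by rewrite lt_neqAle hi dom_le.
  by move/dotp_lt_near; apply: filterS => r hr z zr; rewrite /Iact lt_eqF ?hr.
apply: filterS2 (filter_forall _ nearJ) (filter_forall _ nearI) => r hJ hI z dz zr.
by split=> [j|i]; [apply: hJ | apply: hI].
Qed.

Lemma dom_extend_near z y : dom z -> (forall i, I z i -> I y i) ->
  \forall t \near 0^'+, dom (z + t *: (z - y)).
Proof.
move=> dz hI; have near_i i : \forall t \near 0^'+,
    dotp (b i) (z + t *: (z - y)) <= beta i.
  have [hi|hi] := boolP (I z i).
    apply: nearW => t; have := hI i hi; move: hi; rewrite /Iact dotp_extend.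
    by move=> /eqP -> /eqP ->; rewrite subrr mulr0 addr0.
  have : dotp (b i) z < beta i by rewrite lt_neqAle hi dom_le.
  move/(near_right0_ltD (dotp (b i) z - dotp (b i) y)); apply: filterS => t ht.
  by rewrite dotp_extend ltW.
by apply: filterS (filter_forall _ near_i) => t ht; apply/forallP.
Qed.

Lemma gval_extend_near z y : dom z -> dom y -> (forall j, J z j -> J y j) ->
  \forall t \near 0^'+, dom (z + t *: (z - y)) ->
    gval (z + t *: (z - y)) <= gval z + t * (gval z - gval y).
Proof.
move=> dz dy hJ.
have piece_extend j t : piece j (z + t *: (z - y)) =
    piece j z + t * (piece j z - piece j y) by rewrite /piece dotp_extend; ring.
have near_j j : \forall t \near 0^'+,
    piece j (z + t *: (z - y)) <= gval z + t * (gval z - gval y).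
  have [hj|hj] := boolP (J z j).
    apply: nearW => t; have := hJ j hj; move: hj; rewrite !JactE // piece_extend.
    by move=> /eqP -> /eqP ->.
  have : piece j z < gval z by rewrite lt_neqAle -JactE // hj piece_le_gval.
  move/(near_right0_ltD (piece j z - piece j y - (gval z - gval y))).
  by apply: filterS => t ht; rewrite piece_extend; lra.
apply: filterS (filter_forall _ near_j) => t ht /gval_attained[j <-].
exact: ht.
Qed.

Lemma gval_active_sub_eq z y lam : subgrad z lam -> dom y -> active_sub z y ->
  gval z - gval y = dotp lam (z - y).
Proof.
move=> [dz hz] dy [hJ hI].
have le_dotp : gval z - gval y <= dotp lam (z - y).
  by have := hz y dy; rewrite !dotpBr; lra.
(* At w = z + t (z - y), g w <= g z + t (g z - g y) while the subgradient
   inequality gives g w >= g z + t <lam, z - y>. *)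
have [t t0 [dw hw]] := near_right0_witness
  (filterI (dom_extend_near dz hI) (gval_extend_near dz dy hJ)).
have := hz _ dw; rewrite addrAC subrr add0r dotpZr => hsub.
have : t * dotp lam (z - y) <= t * (gval z - gval y) by have := hw dw; lra.
by rewrite ler_pM2l // => ge_dotp; apply/eqP; rewrite eq_le le_dotp.
Qed.

Section Gap.
Variables (zb lamb : 'rV[R]_m).
Hypothesis hb : subgrad zb lamb.

Definition gap z := gval z - gval zb - dotp lamb (z - zb).

Lemma gap_ge0 z : dom z -> 0 <= gap z.
Proof. by move=> dz; have := hb.2 z dz; rewrite /gap; lra. Qed.

Lemma subgrad_gap_eq0 z : dom z -> gap z = 0 -> subgrad z lamb.
Proof.
move=> dz g0; split=> // w dw; have := hb.2 w dw.
by move: g0; rewrite /gap !dotpBr; lra.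
Qed.

Lemma gap_eq0_transfer z0 z : dom z0 -> gap z0 = 0 -> dom z -> active_sub z0 z ->
  gap z = 0.
Proof.
move=> dz0 g0 dz hsub.
have := gval_active_sub_eq (subgrad_gap_eq0 dz0 g0) dz hsub.
by move: g0; rewrite /gap !dotpBr; lra.
Qed.

Lemma gap_eq_dotp z lam z0 : subgrad z lam -> active_sub z zb ->
  dom z0 -> active_sub z z0 -> gap z0 = dotp (z0 - zb) (lam - lamb).
Proof.
move=> hz hsubb dz0 hsub0.
have := gval_active_sub_eq hz hb.1 hsubb; have := gval_active_sub_eq hz dz0 hsub0.
rewrite /gap !dotpBr !dotpBl (dotpC z0 lam) (dotpC z0 lamb) (dotpC zb lam).
by rewrite (dotpC zb lamb); lra.
Qed.

Definition pattern z := ([ffun j => J z j], [ffun i => I z i]).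

Lemma pattern_active_sub z y : pattern z = pattern y -> active_sub z y.
Proof.
move=> [/ffunP EJ /ffunP EI].
by split=> [j|i]; [have := EJ j | have := EI i]; rewrite !ffunE => ->.
Qed.

Lemma gap_eq0_near : \forall r \near 0^'+, forall z lam, subgrad z lam ->
  vnorm (z - zb) <= r -> vnorm (lam - lamb) <= r -> gap z = 0.
Proof.
have near_pattern p : \forall r \near 0^'+, forall z lam, pattern z = p ->
    subgrad z lam -> vnorm (z - zb) <= r -> vnorm (lam - lamb) <= r -> gap z = 0.
  have [[z0 [dz0 <-]]|none] := pselect (exists z0, dom z0 /\ pattern z0 = p);
    last by apply: nearW => r z lam pz [dz _]; case: none; exists z.
  have [g0|g0] := eqVneq (gap z0) 0.
    apply: nearW => r z lam pz [dz _] _ _.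
    exact: gap_eq0_transfer dz0 g0 dz (pattern_active_sub (esym pz)).
  have gpos : 0 < gap z0 by rewrite lt_neqAle eq_sym g0 gap_ge0.
  apply: filterS2 (active_sub_near hb.1)
    (near_right0_ltD (l1norm (z0 - zb)) gpos) => r hr hlt z lam pz hz zr lr.
  have := gap_eq_dotp hz (hr z hz.1 zr) dz0 (pattern_active_sub pz).
  by have := dotp_le_l1norm (z0 - zb) lr; lra.
by apply: filterS (filter_forall _ near_pattern) => r hr z lam; apply: hr.
Qed.

Lemma gap_decomposition (sigma : 'I_l -> R) (tau : 'I_s -> R) z :
  \sum_(j < l | J zb j) sigma j = 1 ->
  lamb = \sum_(j < l | J zb j) sigma j *: a j + \sum_(i < s | I zb i) tau i *: b i ->
  gap z = \sum_(j < l | J zb j) sigma j * (gval z - piece j z)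
          + \sum_(i < s | I zb i) tau i * (beta i - dotp (b i) z).
Proof.
move=> hsum hlam.
have termJ j : J zb j -> sigma j * (gval z - piece j z) =
    sigma j * (gval z - gval zb) - dotp (sigma j *: a j) (z - zb).
  by rewrite JactE ?hb.1 // => /eqP <-; rewrite dotpZl dotpBr /piece; ring.
have termI i : I zb i -> tau i * (beta i - dotp (b i) z) =
    - dotp (tau i *: b i) (z - zb).
  by move=> /eqP <-; rewrite dotpZl dotpBr; ring.
rewrite (eq_bigr _ termJ) (eq_bigr _ termI) sumrB sumrN -mulr_suml hsum mul1r.
by rewrite /gap hlam dotpDl !dotp_suml; ring.
Qed.

Lemma active_of_gap_eq0 (sigma : 'I_l -> R) (tau : 'I_s -> R) z :
  (forall j, J zb j -> 0 <= sigma j) -> (forall i, I zb i -> 0 <= tau i) ->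
  \sum_(j < l | J zb j) sigma j = 1 ->
  lamb = \sum_(j < l | J zb j) sigma j *: a j + \sum_(i < s | I zb i) tau i *: b i ->
  dom z -> gap z = 0 ->
  (forall j, J zb j -> 0 < sigma j -> J z j) /\
  (forall i, I zb i -> 0 < tau i -> I z i).
Proof.
move=> hsig htau hsum hlam dz; rewrite (gap_decomposition z hsum hlam) => /eqP.
have termJ j : J zb j -> 0 <= sigma j * (gval z - piece j z).
  by move=> hj; rewrite mulr_ge0 ?hsig ?subr_ge0 ?piece_le_gval.
have termI i : I zb i -> 0 <= tau i * (beta i - dotp (b i) z).
  by move=> hi; rewrite mulr_ge0 ?htau ?subr_ge0 ?dom_le.
rewrite paddr_eq0 ?sumr_ge0 // => /andP[/eqP SJ /eqP SI].
split=> [j hj sj|i hi ti].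
  have /eqP := psumr_eq0P termJ SJ hj.
  by rewrite mulf_eq0 gt_eqF //= subr_eq0 JactE // eq_sym.
have /eqP := psumr_eq0P termI SI hi.
by rewrite mulf_eq0 gt_eqF //= subr_eq0 /Iact eq_sym.
Qed.

End Gap.

End Polyhedral.

Theorem lemma2p1 (R : realType) (m l s : nat) (hl : (0 < l)%N)
  (a : 'I_l -> 'rV[R]_m) (alpha : 'I_l -> R)
  (b : 'I_s -> 'rV[R]_m) (beta : 'I_s -> R)
  (zb lamb : 'rV[R]_m)
  (hgph : subdiff (polyg a alpha b beta) zb lamb) :
  exists2 r : R, 0 < r &
    forall (sigma : 'I_l -> R) (tau : 'I_s -> R),
      (forall j, Jact a alpha b beta zb j -> 0 <= sigma j) ->
      (forall i, Iact b beta zb i -> 0 <= tau i) ->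
      \sum_(j < l | Jact a alpha b beta zb j) sigma j = 1 ->
      lamb = \sum_(j < l | Jact a alpha b beta zb j) sigma j *: a j
             + \sum_(i < s | Iact b beta zb i) tau i *: b i ->
      forall z lam : 'rV[R]_m,
        subdiff (polyg a alpha b beta) z lam ->
        Num.sqrt (vnorm (z - zb) ^+ 2 + vnorm (lam - lamb) ^+ 2) <= r ->
        (forall j, Jact a alpha b beta zb j -> 0 < sigma j -> Jact a alpha b beta z j) /\
        (forall i, Iact b beta zb i -> 0 < tau i -> Iact b beta z i).
Proof.
have hb := subdiff_subgrad hl hgph.
have [r r0 hr] := near_right0_witness (gap_eq0_near hl hb).
exists r => // sigma tau hsig htau hsum hlam z lam hz hball.
have hz' := subdiff_subgrad hl hz.
have [zr lr] := le_sqrt_sqrD (sqrtr_ge0 _) (sqrtr_ge0 _) hball.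
have [dz _] := hz'.
exact (active_of_gap_eq0 hl hb hsig htau hsum hlam dz (hr z lam hz' zr lr)).
Qed.
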